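(* Let $\delta$ be a non-null classifier and $t\ge0$. For each $\beta\in\{0,1\}$, the maximizer of the conditional payoff $V_\beta(r)$ over $r\in\mathbb{R}$ is $r^*_\beta=k^*_\beta(t,F)/\rho(\delta,\phi)$, where $k_0^*=k_0^*(t,F)$ and $k_1^*=k_1^*(t,F)$ are defined implicitly by $k_0^*=t-\frac{F(k_0^* )}{f(k_0^* )}$ and $k_1^*=t+\frac{1-F(k_1^* )}{f(k_1^* )}$. In particular these two values do not depend on the individual's cost $\gamma_i$.
   Context: Individuals have privately known costs $\gamma_i\in\mathbb{R}$ of choosing $\beta_i=1$ (compliance) rather than $\beta_i=0$, distributed according to a continuously differentiable CDF $F$ with log-concave density $f$ of full support on $\mathbb{R}$. A classifier $\delta=(\delta_1,\delta_0)\in[0,1]^2$ assigns $d_i\in\{0,1\}$ with $\Pr[d_i=s_i\mid s_i]=\delta_{s_i}$, where $\Pr[s_i=\beta_i]=\phi\in(\tfrac12,1]$. Let $\rho=\rho(\delta,\phi)=(\delta_1+\delta_0-1)(2\phi-1)$; $\delta$ is non-null if $\rho\ne0$. Individuals with $d_i=1$ receive reward $r$, financed by an equal tax on everyone (budget balance), and each gets $t\cdot\pi$ where $\pi=F(r\rho)$ is the compliance rate (individuals comply iff $\gamma_i\le r\rho$). Conditional payoffs: $V_1(r)=-\gamma_i+r\rho(1-F(r\rho))+tF(r\rho)$ (complying) and $V_0(r)=-r\rho F(r\rho)+tF(r\rho)$ (not complying). *)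

From Stdlib Require Import Reals.
From Coquelicot Require Import Coquelicot.
Open Scope R_scope.

Definition rho (d1 d0 phi : R) : R := (d1 + d0 - 1) * (2 * phi - 1).

Definition log_concave (f : R -> R) : Prop :=
  forall x y l, 0 <= l <= 1 ->
    l * ln (f x) + (1 - l) * ln (f y) <= ln (f (l * x + (1 - l) * y)).

Definition cdf_with_logconcave_density (F f : R -> R) : Prop :=
  (forall x, is_derive F x (f x)) /\
  (forall x, continuous f x) /\
  (forall x, 0 < f x) /\
  is_lim F m_infty 0 /\
  is_lim F p_infty 1 /\
  log_concave f.

Definition V1 (F : R -> R) (t rh gamma : R) (r : R) : R :=
  - gamma + r * rh * (1 - F (r * rh)) + t * F (r * rh).

Definition V0 (F : R -> R) (t rh : R) (r : R) : R :=
  - r * rh * F (r * rh) + t * F (r * rh).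

Definition is_unique_maximizer (V : R -> R) (r : R) : Prop :=
  forall r', V r' <= V r /\ (V r' = V r -> r' = r).

(** The first-order condition for [V0] reads [k = t - F k / f k] with [k = r rho].
    Log-concavity of the density [f] makes [F / f] nondecreasing, so
    [k |-> t - k - F k / f k] is continuous and strictly decreasing and changes sign:
    it has exactly one zero, and since [(t - k) F k] has derivative
    [f k (t - k - F k / f k)] that zero is its unique global maximizer.  The payoff
    [V0] is this function of [r rho], hence is uniquely maximized at [k0 / rho], and
    the cost [gamma] only enters [V1] additively.  The case of [V1] is the same
    statement for the reflected distribution [1 - F (- m)], whose density [f (- m)]
    is again log-concave. *)

From Stdlib Require Import Reals Lra.
From Coquelicot Require Import Coquelicot.
Open Scope R_scope.

Lemma log_concave_shift_mul_le (f : R -> R) :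
  log_concave f -> (forall x, 0 < f x) ->
  forall s x d, s <= x -> 0 <= d -> f s * f (x + d) <= f (s + d) * f x.
Proof.
  intros lc fpos s x d hsx hd.
  destruct (Req_dec (x + d - s) 0) as [Hlen | Hlen].
  { assert (d = 0) by lra; assert (x = s) by lra; subst.
    rewrite Rplus_0_r; lra. }
  (* [s + d] and [x] are the convex combinations of [s] and [x + d] with weights [l] and [1 - l]. *)
  set (l := (x - s) / (x + d - s)).
  assert (Hl : 0 <= l <= 1).
  { unfold l; split.
    - apply Rdiv_le_0_compat; lra.
    - apply Rmult_le_reg_r with (x + d - s); [lra |].
      field_simplify; lra. }
  assert (Hsd := lc s (x + d) l Hl).
  assert (Hx := lc s (x + d) (1 - l) ltac:(lra)).
  replace (l * s + (1 - l) * (x + d)) with (s + d) in Hsd by (unfold l; field; lra).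
  replace ((1 - l) * s + (1 - (1 - l)) * (x + d)) with x in Hx by (unfold l; field; lra).
  destruct (Rle_or_lt (f s * f (x + d)) (f (s + d) * f x)) as [| Hgt]; [easy | exfalso].
  apply ln_increasing in Hgt; [| apply Rmult_lt_0_compat; apply fpos].
  rewrite !ln_mult in Hgt by apply fpos; lra.
Qed.

Lemma is_derive_pos_increasing (F f : R -> R) :
  (forall x, is_derive F x (f x)) -> (forall x, 0 < f x) ->
  forall x y, x < y -> F x < F y.
Proof.
  intros dF fpos x y hxy.
  destruct (MVT_cor2 F f x y hxy) as [c [Hc _]].
  { intros c _; apply is_derive_Reals, dF. }
  assert (Hfc := fpos c); nra.
Qed.

Lemma Derive_eq_of_is_derive (F f : R -> R) :
  (forall x, is_derive F x (f x)) -> forall x, Derive F x = f x.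
Proof. intros dF x; apply is_derive_unique, dF. Qed.

Section FixedPoint.

Variables F f : R -> R.
Hypothesis HF : cdf_with_logconcave_density F f.

Let dF : forall x, is_derive F x (f x). Proof. apply HF. Qed.
Let fpos : forall x, 0 < f x. Proof. apply HF. Qed.

Lemma cdf_left_tail eps :
  0 < eps -> exists M, forall s, s < M -> Rabs (F s) < eps.
Proof.
  intros heps.
  destruct HF as (_ & _ & _ & Hlim & _).
  apply is_lim_spec in Hlim.
  destruct (Hlim (mkposreal eps heps)) as [M HM].
  exists M; intros s hs.
  specialize (HM s hs); simpl in HM.
  rewrite Rminus_0_r in HM; exact HM.
Qed.

Lemma cdf_pos x : 0 < F x.
Proof.
  assert (Hmono := is_derive_pos_increasing F f dF fpos).
  assert (Hnneg : forall y, 0 <= F y).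
  { intro y; destruct (Rle_or_lt 0 (F y)) as [| Hy]; [easy |].
    destruct (cdf_left_tail (- F y)) as [M HM]; [lra |].
    assert (Hs := HM (Rmin M y - 1) ltac:(pose proof (Rmin_l M y); lra)).
    assert (Hlt := Hmono (Rmin M y - 1) y ltac:(pose proof (Rmin_r M y); lra)).
    apply Rabs_def2 in Hs; lra. }
  assert (Hlt := Hmono (x - 1) x ltac:(lra)).
  assert (Hprev := Hnneg (x - 1)); lra.
Qed.

(* For [x <= y], the function [s |-> F (s + (y - x)) f x - F s f y] is nondecreasing
   on [s <= x] by [log_concave_shift_mul_le] and tends to [0] at [-oo]. *)
Lemma cdf_density_cross_le x y : x <= y -> F x * f y <= F y * f x.
Proof.
  intros hxy.
  destruct (Rle_or_lt (F x * f y) (F y * f x)) as [| Hcontra]; [easy | exfalso].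
  destruct HF as (_ & _ & _ & _ & _ & lc).
  set (d := y - x).
  set (g := fun s => F (s + d) * f x - F s * f y).
  set (e := F x * f y - F y * f x).
  assert (Hfx := fpos x); assert (Hfy := fpos y).
  destruct (cdf_left_tail (e / (f x + f y))) as [M HM].
  { apply Rdiv_lt_0_compat; unfold e; lra. }
  set (s := Rmin x (M - d) - 1).
  assert (Hsx : s < x) by (unfold s; pose proof (Rmin_l x (M - d)); lra).
  assert (HsM : s + d < M) by (unfold s; pose proof (Rmin_r x (M - d)); lra).
  assert (Hmono : g s <= g x).
  { destruct (MVT_cor2 g (fun c => f (c + d) * f x - f c * f y) s x Hsx)
      as [c [Hc [_ Hcx]]].
    - intros c _; apply is_derive_Reals; unfold g.
      auto_derive.
      + repeat split; [exists (f (c + d)) | exists (f c)]; apply dF.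
      + rewrite !(Derive_eq_of_is_derive F f dF); ring.
    - assert (Hlc := log_concave_shift_mul_le f lc fpos c x d ltac:(lra) ltac:(unfold d; lra)).
      replace (x + d) with y in Hlc by (unfold d; ring).
      nra. }
  assert (Hgx : g x = - e) by (unfold g, e, d; replace (x + (y - x)) with y by ring; ring).
  assert (Hsd := HM (s + d) HsM); assert (Hs := HM s ltac:(unfold d in *; lra)).
  apply Rabs_def2 in Hsd; apply Rabs_def2 in Hs.
  assert (He : e / (f x + f y) * (f x + f y) = e) by (field; lra).
  assert (Hsdx : - (e / (f x + f y)) * f x < F (s + d) * f x)
    by (apply Rmult_lt_compat_r; lra).
  assert (Hsy : F s * f y < e / (f x + f y) * f y) by (apply Rmult_lt_compat_r; lra).
  assert (Hgs : g s = F (s + d) * f x - F s * f y) by reflexivity.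
  lra.
Qed.

Lemma cdf_density_ratio_le a b : a <= b -> F a / f a <= F b / f b.
Proof.
  intros hab.
  assert (Hcross := cdf_density_cross_le a b hab).
  assert (Hfa := fpos a); assert (Hfb := fpos b).
  apply Rmult_le_reg_r with (f a * f b); [nra |].
  replace (F a / f a * (f a * f b)) with (F a * f b) by (field; lra).
  replace (F b / f b * (f a * f b)) with (F b * f a) by (field; lra).
  lra.
Qed.

Lemma first_order_gap_decreasing t a b :
  a < b -> t - b - F b / f b < t - a - F a / f a.
Proof. intros hab; assert (H := cdf_density_ratio_le a b (Rlt_le _ _ hab)); lra. Qed.

Lemma first_order_gap_continuous t : continuity (fun k => t - k - F k / f k).
Proof.
  intros k.
  apply continuity_pt_minus.
  - apply continuity_pt_minus; [apply continuity_pt_const; easy | apply continuity_pt_id].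
  - apply continuity_pt_div.
    + apply continuity_pt_filterlim, (ex_derive_continuous (V := R_NormedModule)).
      exists (f k); apply dF.
    + apply continuity_pt_filterlim; apply HF.
    + apply Rgt_not_eq, fpos.
Qed.

Lemma first_order_fixed_point_unique t : exists! k, k = t - F k / f k.
Proof.
  assert (Ht : 0 < F t / f t) by (apply Rdiv_lt_0_compat; [apply cdf_pos | apply fpos]).
  set (a := t - F t / f t - 1).
  assert (Hat : a < t) by (unfold a; lra).
  assert (Hcont : continuity (fun k => - (t - k - F k / f k))).
  { intro k; apply continuity_pt_opp, first_order_gap_continuous. }
  destruct (IVT _ a t Hcont Hat) as [k [_ Hk]].
  - assert (Ha := cdf_density_ratio_le a t (Rlt_le _ _ Hat)); unfold a in *; lra.
  - lra.
  - exists k; split; [lra |].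
    intros k' Hk'.
    destruct (Rtotal_order k k') as [Hlt | [Heq | Hgt]]; [| easy |].
    + assert (H := first_order_gap_decreasing t k k' Hlt); lra.
    + assert (H := first_order_gap_decreasing t k' k Hgt); lra.
Qed.

Lemma first_order_fixed_point_maximizer t k :
  k = t - F k / f k -> is_unique_maximizer (fun u => (t - u) * F u) k.
Proof.
  intros Hk k'.
  assert (Hder : forall c, derivable_pt_lim (fun u => (t - u) * F u) c
                             (f c * (t - c - F c / f c))).
  { intro c; apply is_derive_Reals; auto_derive.
    - exists (f c); apply dF.
    - rewrite (Derive_eq_of_is_derive F f dF); assert (Hfc := fpos c); field; lra. }
  destruct (Rtotal_order k' k) as [Hlt | [Heq | Hgt]].
  - destruct (MVT_cor2 _ _ k' k Hlt (fun c _ => Hder c)) as [c [Hmvt [_ Hck]]].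
    assert (Hgap := first_order_gap_decreasing t c k Hck).
    assert (Hslope : 0 < f c * (t - c - F c / f c) * (k - k')).
    { apply Rmult_lt_0_compat; [apply Rmult_lt_0_compat; [apply fpos |] |]; lra. }
    split; intros; lra.
  - subst; split; intros; lra.
  - destruct (MVT_cor2 _ _ k k' Hgt (fun c _ => Hder c)) as [c [Hmvt [Hkc _]]].
    assert (Hgap := first_order_gap_decreasing t k c Hkc).
    assert (Hslope : 0 < f c * - (t - c - F c / f c) * (k' - k)).
    { apply Rmult_lt_0_compat; [apply Rmult_lt_0_compat; [apply fpos |] |]; lra. }
    split; intros; lra.
Qed.

End FixedPoint.

Lemma cdf_with_logconcave_density_reflect (F f : R -> R) :
  cdf_with_logconcave_density F f ->
  cdf_with_logconcave_density (fun m => 1 - F (- m)) (fun m => f (- m)).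
Proof.
  intros (dF & cf & fpos & Hlim_m & Hlim_p & lc).
  assert (Hopp : forall x, is_lim (fun y => - y) x (Rbar_opp x)).
  { intro x; apply is_lim_opp, is_lim_id. }
  assert (Hrefl : forall x l, is_lim F (Rbar_opp x) l -> is_lim (fun m => F (- m)) x l).
  { intros x l HFl; apply (is_lim_comp F (fun y => - y) x l (Rbar_opp x)); [easy | apply Hopp |].
    destruct x as [a | |]; simpl.
    - exists (mkposreal 1 Rlt_0_1); intros y _ Hya Heq; apply Hya.
      apply Rbar_finite_eq in Heq; lra.
    - exists 0; easy.
    - exists 0; easy. }
  split; [| split; [| split; [| split; [| split]]]].
  - intro x; auto_derive.
    + exists (f (- x)); apply dF.
    + rewrite (Derive_eq_of_is_derive F f dF); ring.
  - intro x; apply (continuous_comp (fun m => - m) f); [| apply cf].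
    apply (continuous_opp (fun m : R => m)), continuous_id.
  - intro x; apply fpos.
  - apply (is_lim_minus _ _ _ 1 1); [apply is_lim_const | apply Hrefl, Hlim_p |].
    unfold is_Rbar_minus, is_Rbar_plus; simpl; do 2 f_equal; ring.
  - apply (is_lim_minus _ _ _ 1 0); [apply is_lim_const | apply Hrefl, Hlim_m |].
    unfold is_Rbar_minus, is_Rbar_plus; simpl; do 2 f_equal; ring.
  - intros x y l hl.
    replace (- (l * x + (1 - l) * y)) with (l * - x + (1 - l) * - y) by ring.
    apply lc, hl.
Qed.

Lemma is_unique_maximizer_comp_scale (V G : R -> R) (c a k : R) :
  a <> 0 -> (forall r, V r = c + G (r * a)) ->
  is_unique_maximizer G k -> is_unique_maximizer V (k / a).
Proof.
  intros Ha HV HG r.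
  rewrite !HV.
  replace (k / a * a) with k by (field; exact Ha).
  destruct (HG (r * a)) as [Hle Heq].
  split; [lra |].
  intros E; replace r with (r * a / a) by (field; exact Ha).
  rewrite (Heq ltac:(lra)); reflexivity.
Qed.

Theorem corollary1 (F f : R -> R) (d1 d0 phi t : R) :
  cdf_with_logconcave_density F f ->
  0 <= d1 <= 1 -> 0 <= d0 <= 1 -> 1 / 2 < phi <= 1 ->
  rho d1 d0 phi <> 0 ->
  0 <= t ->
  ((exists! k0, k0 = t - F k0 / f k0) /\
   (forall k0, k0 = t - F k0 / f k0 ->
      is_unique_maximizer (V0 F t (rho d1 d0 phi)) (k0 / rho d1 d0 phi))) /\
  ((exists! k1, k1 = t + (1 - F k1) / f k1) /\
   (forall k1, k1 = t + (1 - F k1) / f k1 ->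
      forall gamma : R,
        is_unique_maximizer (V1 F t (rho d1 d0 phi) gamma) (k1 / rho d1 d0 phi))).
Proof.
  (* Only [rho <> 0] matters. *)
  intros HF _ _ _ Hrho _.
  set (rh := rho d1 d0 phi) in *.
  assert (HR := cdf_with_logconcave_density_reflect F f HF).
  (* [k1] solves its equation iff [- k1] solves the [k0]-equation of the reflected law at [- t]. *)
  assert (Hreflect : forall k, k = t + (1 - F k) / f k <->
                               - k = - t - (1 - F (- - k)) / f (- - k)).
  { intro k; rewrite Ropp_involutive; lra. }
  split; split.
  - exact (first_order_fixed_point_unique F f HF t).
  - intros k0 Hk0.
    apply (is_unique_maximizer_comp_scale _ (fun u => (t - u) * F u) 0 rh k0 Hrho);
      [intro r; unfold V0; ring | exact (first_order_fixed_point_maximizer F f HF t k0 Hk0)].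
  - destruct (first_order_fixed_point_unique _ _ HR (- t)) as [m [Hm Huniq]].
    exists (- m); split; [apply Hreflect; rewrite Ropp_involutive; exact Hm |].
    intros k Hk; rewrite (Huniq (- k)) by (apply Hreflect, Hk); ring.
  - intros k1 Hk1 gamma.
    replace (k1 / rh) with (- k1 / - rh) by (field; exact Hrho).
    apply (is_unique_maximizer_comp_scale _ (fun u => (- t - u) * (1 - F (- u)))
             (- gamma + t) (- rh) (- k1) ltac:(lra)).
    + intro r; unfold V1; replace (- (r * - rh)) with (r * rh) by ring; ring.
    + apply (first_order_fixed_point_maximizer _ _ HR (- t)), Hreflect, Hk1.
Qed.
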